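(* Every uncountable space $X\in\mathsf{CB_0}(\mathbf{\Sigma}^1_1)$ has cardinality of the continuum.
   Context: $\mathcal{N}=\omega^\omega$ is the Baire space. $P\omega$ is the set of all subsets of $\omega$ with the Scott topology, whose basic open sets are $\{A\subseteq\omega\mid F\subseteq A\}$ for finite $F\subseteq\omega$. For a space $Y$, $\mathbf{\Sigma}^1_1(Y)$ is the set of projections $\{y\in Y\mid\exists p\in\mathcal{N}\,(p,y)\in A\}$ of sets $A\subseteq\mathcal{N}\times Y$ whose complement is a countable union of sets $U\setminus V$ with $U,V$ open in $\mathcal{N}\times Y$. $\mathsf{CB_0}(\mathbf{\Sigma}^1_1)$ is the class of spaces homeomorphic to a subspace $S\subseteq P\omega$ with $S\in\mathbf{\Sigma}^1_1(P\omega)$. *)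

From HB Require Import structures.
From mathcomp Require Import all_boot.
From mathcomp Require Import boolp classical_sets functions cardinality topology.

Set Implicit Arguments.
Unset Strict Implicit.
Unset Printing Implicit Defensive.

Local Open Scope classical_set_scope.

Definition baire := nat -> nat.
Definition Pomega := set nat.

Definition scott_open (U : set Pomega) : Prop :=
  forall A, U A ->
    exists F : set nat, finite_set F /\ F `<=` A /\
      (forall B : Pomega, F `<=` B -> U B).

(* Product topology on N x P(omega) (N with the usual product-of-discrete
   topology): basic open sets are [s] x {A | F `<=` A}, where [s] is the set
   of sequences extending the finite sequence s, and F is finite. *)
Definition baire_scott_open (W : set (baire * Pomega)) : Prop :=
  forall p A, W (p, A) ->
    exists (n : nat) (F : set nat), finite_set F /\ F `<=` A /\
      (forall (q : baire) (B : Pomega),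
          (forall i, (i < n)%N -> q i = p i) -> F `<=` B -> W (q, B)).

(* Sigma^1_1(P omega): projections along N of sets A `<=` N x P(omega) whose
   complement is a countable union of differences U_n \ V_n of open sets. *)
Definition Sigma11_Pomega (S : set Pomega) : Prop :=
  exists U V : nat -> set (baire * Pomega),
    (forall n, baire_scott_open (U n)) /\
    (forall n, baire_scott_open (V n)) /\
    S = [set y | exists p : baire,
                  ~ (exists n, U n (p, y) /\ ~ V n (p, y))].

Definition homeomorphic_to_subspace (X : topologicalType) (S : set Pomega)
  : Prop :=
  exists f : X -> Pomega,
    injective f /\ range f = S /\
    (forall U : set X,
        open U <-> exists V, scott_open V /\ f @` U = V `&` S).

Definition CB0_Sigma11 (X : topologicalType) : Prop :=
  exists S : set Pomega, Sigma11_Pomega S /\ homeomorphic_to_subspace X S.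

From mathcomp Require Import all_boot zify.
From mathcomp Require Import boolp classical_sets functions cardinality topology.

(* A Sigma^1_1 subset of P(omega) is the projection of a closed subset of
   (nat * nat)^nat * bool^nat: besides a witness p, a point records for every n
   either that (p, Y) avoids U_n, or the level of a basic neighbourhood of
   (p, Y) contained in V_n.  For projections of closed sets C of A^nat * B^nat
   (A, B countable) the perfect set argument applies: discarding the countably
   many basic cylinders with countable projection leaves points all of whose
   neighbourhoods have uncountable projection, each of which splits into two
   such points with different second coordinates.  Iterating gives a Cantor
   scheme whose branches converge in C and embed bool^nat into the projection,
   so an uncountable Sigma^1_1 set has the cardinality of the continuum by
   Cantor-Bernstein. *)

Set Implicit Arguments.
Unset Strict Implicit.
Unset Printing Implicit Defensive.

Local Open Scope classical_set_scope.

Lemma countable_setU T (A B : set T) :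
  countable A -> countable B -> countable (A `|` B).
Proof.
move=> cA cB; have -> : A `|` B = \bigcup_(i in [set: bool]) (if i then A else B).
  apply/seteqP; split=> x; first by case=> ?; [exists true | exists false].
  by case=> -[] _ ?; [left | right].
by apply: bigcup_countable => // -[].
Qed.

Lemma not_countable_setD T (E D : set T) :
  ~ countable E -> countable D -> exists2 y, E y & ~ D y.
Proof.
move=> nE cD; apply: contrapT => noy; apply: nE; apply: (sub_countable _ cD).
by apply: subset_card_le => y Ey; apply: contrapT => nDy; apply: noy; exists y.
Qed.

Lemma not_countable_setD2 T (E D : set T) : ~ countable E -> countable D ->
  exists y1 y2, [/\ E y1, E y2, ~ D y1, ~ D y2 & y1 <> y2].
Proof.
move=> nE cD; have [y1 Ey1 nDy1] := not_countable_setD nE cD.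
have cDy1 : countable (D `|` [set y1]) by apply: countable_setU => //; exact: countable1.
have [y2 Ey2 nDy2] := not_countable_setD nE cDy1.
by exists y1, y2; split=> // [Dy2 | y12]; apply: nDy2; [left | right].
Qed.

Lemma card_le_inj T (U : pointedType) (A : set T) (B : set U) (f : T -> U) :
  {in A &, injective f} -> (forall a, A a -> B (f a)) -> (A #<= B)%card.
Proof. by move=> f_inj fAB; apply/pcard_leP/injfunPex; exists f. Qed.

Lemma finite_set_nat_bounded (F : set nat) :
  finite_set F -> exists M, forall i, F i -> (i < M)%N.
Proof.
move=> /finite_seqP[s ->]; elim: s => [|a s [M sM]]; first by exists 0%N.
exists (maxn M a.+1) => i /=; rewrite inE => /orP[/eqP ->|/sM iM].
  by rewrite leq_maxr.
exact: leq_trans iM (leq_maxl _ _).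
Qed.

Lemma mkseq_eqP T (f g : nat -> T) m :
  mkseq f m = mkseq g m <-> (forall i, (i < m)%N -> f i = g i).
Proof.
split=> [fg i im | fg]; last by apply/eq_in_map => i; rewrite mem_iota => /fg.
by have := congr1 (fun s => nth (f 0%N) s i) fg; rewrite !nth_mkseq.
Qed.

Section PerfectProjection.
Variables A B : countType.

Definition seqpair := ((nat -> A) * (nat -> B))%type.

Definition agree (P Q : seqpair) m :=
  forall i, (i < m)%N -> P.1 i = Q.1 i /\ P.2 i = Q.2 i.

Lemma agree_refl P m : agree P P m. Proof. by []. Qed.

Lemma agree_trans P Q R m : agree P Q m -> agree Q R m -> agree P R m.
Proof. by move=> PQ QR i im; have [-> ->] := PQ i im; exact: QR. Qed.

Lemma agree_le P Q m m' : agree P Q m -> (m' <= m)%N -> agree P Q m'.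
Proof. by move=> PQ m'm i im'; apply: PQ; exact: leq_trans m'm. Qed.

Definition prefix_closed (C : set seqpair) :=
  forall P, (forall m, exists2 Q, C Q & agree P Q m) -> C P.

Variable C : set seqpair.

Definition proj_nbhd Q m := [set y | exists2 x, C (x, y) & agree (x, y) Q m].

Definition kernel P := C P /\ forall m, ~ countable (proj_nbhd P m).

Definition proj_cylinder (st : seq A * seq B) := [set y | exists2 x, C (x, y) &
  mkseq x (size st.1) = st.1 /\ mkseq y (size st.1) = st.2].

Definition thin_proj :=
  \bigcup_(st in [set st | countable (proj_cylinder st)]) proj_cylinder st.

Lemma countable_thin_proj : countable thin_proj.
Proof. exact: bigcup_countable. Qed.

Lemma kernel_of_not_thin x y : C (x, y) -> ~ thin_proj y -> kernel (x, y).
Proof.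
move=> Cxy nthin; split=> // m cnbhd; apply: nthin.
exists (mkseq x m, mkseq y m); last by exists x; rewrite //= size_mkseq.
apply: (sub_countable _ cnbhd); apply: subset_card_le => y' [x' Cx'y'].
rewrite /= size_mkseq => -[/mkseq_eqP ex /mkseq_eqP ey].
by exists x' => // i im; split; [exact: ex | exact: ey].
Qed.

Definition splitting Q m (r : seqpair * seqpair * nat) := [/\
  kernel r.1.1 /\ kernel r.1.2, agree r.1.1 Q m /\ agree r.1.2 Q m,
  (m < r.2)%N & exists2 i, (i < r.2)%N & r.1.1.2 i <> r.1.2.2 i].

Lemma kernel_splitting Q m : kernel Q -> exists r, splitting Q m r.
Proof.
move=> [_ /(_ m) nQ].
have [y1 [y2 [[x1 C1 a1] [x2 C2 a2] nthin1 nthin2 y12]]] :=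
  not_countable_setD2 nQ countable_thin_proj.
have [i yi] : exists i, y1 i <> y2 i.
  by apply: contrapT => ney; apply/y12/funext => i; apply: contrapT => ?; apply: ney; exists i.
exists ((x1, y1), (x2, y2), (maxn m i).+1); split=> //.
- by split; apply: kernel_of_not_thin.
- by rewrite ltnS leq_maxl.
- by exists i; rewrite ?ltnS ?leq_maxr.
Qed.

Section CantorScheme.
Hypothesis C_closed : prefix_closed C.
Variable split : seqpair -> nat -> seqpair * seqpair * nat.
Hypothesis splitP : forall Q m, kernel Q -> splitting Q m (split Q m).
Variable P0 : seqpair.
Hypothesis kernel_P0 : kernel P0.

(* [node b n] is reached by following [b 0, ..., b (n - 1)] down the scheme;
   its second component is the length of the prefix fixed at that node. *)
Fixpoint node (b : nat -> bool) n : seqpair * nat :=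
  if n is n'.+1 then
    let r := split (node b n').1 (node b n').2 in (if b n' then r.1.2 else r.1.1, r.2)
  else (P0, 0%N).

Lemma node_kernel b n : kernel (node b n).1.
Proof.
elim: n => //= n IH.
by have [[K1 K2] _ _ _] := splitP (node b n).2 IH; case: (b n).
Qed.

Lemma node_step b n : agree (node b n.+1).1 (node b n).1 (node b n).2 /\
  ((node b n).2 < (node b n.+1).2)%N.
Proof.
have [_ [a1 a2] lt _] := splitP (node b n).2 (node_kernel b n).
by split=> //=; case: (b n).
Qed.

Lemma node_size_ge b n : (n <= (node b n).2)%N.
Proof. by elim: n => //= n IH; apply: leq_trans (proj2 (node_step b n)). Qed.

Lemma node_agree b k n :
  (k <= n)%N -> agree (node b n).1 (node b k).1 (node b k).2.
Proof.
have mono : {homo (fun n => (node b n).2) : i j / (i <= j)%N}.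
  by apply: homo_leq => [//||i]; [exact: leq_trans | exact/ltnW/(proj2 (node_step b i))].
elim: n => [|n IH kn]; first by rewrite leqn0 => /eqP ->.
have [->|ne] := eqVneq k n.+1; first exact: agree_refl.
have kn' : (k <= n)%N by lia.
have le_kn : ((node b k).2 <= (node b n).2)%N := mono _ _ kn'.
exact: agree_trans (agree_le (proj1 (node_step b n)) le_kn) (IH kn').
Qed.

Definition branch b : seqpair :=
  (fun i => (node b i.+1).1.1 i, fun i => (node b i.+1).1.2 i).

Lemma branch_agree b n : agree (branch b) (node b n).1 (node b n).2.
Proof.
move=> i ilt; case: (leqP i.+1 n) => [iSn | /ltnW ni].
  by have [-> ->] := node_agree iSn (leq_trans (ltnSn i) (node_size_ge b i.+1)).
exact (node_agree ni ilt).
Qed.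

Lemma branch_in b : C (branch b).
Proof.
apply: C_closed => m; exists (node b m).1; first by have [] := node_kernel b m.
by move=> i im; apply: branch_agree; exact: leq_trans im (node_size_ge b m).
Qed.

Lemma node_eq b b' n :
  (forall j, (j < n)%N -> b j = b' j) -> node b n = node b' n.
Proof.
elim: n => //= n IH bb'.
by rewrite bb' // IH // => j jn; apply/bb'/ltnW.
Qed.

Lemma branch_inj : injective (fun b => (branch b).2).
Proof.
move=> b b' ebb'; apply: contrapT => nbb'.
have ex_diff : exists n, b n != b' n.
  apply: contrapT => ne; apply/nbb'/funext => n.
  by apply: contrapT => ?; apply: ne; exists n; apply/eqP.
case: (ex_minnP ex_diff) => n bn n_min.
have eq_n : node b n = node b' n.
  by apply: node_eq => j jn; apply/eqP; apply: contraTT jn => /n_min; rewrite leqNgt.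
have [_ _ _ [i ilt ne]] := splitP (node b n).2 (node_kernel b n).
have [_ e] := branch_agree (b:=b) (n:=n.+1) ilt.
have ilt' : (i < (node b' n.+1).2)%N by rewrite /= -eq_n.
have [_ e'] := branch_agree (b:=b') (n:=n.+1) ilt'.
move: (congr1 (fun y => y i) ebb'); rewrite /= in e e' *; rewrite e e' -eq_n.
by move: bn; case: (b n); case: (b' n) => //= _ ?; apply: ne.
Qed.

End CantorScheme.

Theorem perfect_projection : prefix_closed C ->
  ~ countable [set y | exists x, C (x, y)] ->
  exists h : (nat -> bool) -> (nat -> B),
    injective h /\ forall b, exists x, C (x, h b).
Proof.
move=> C_closed nproj.
have split_ex (Qm : seqpair * nat) : exists r, kernel Qm.1 -> splitting Qm.1 Qm.2 r.
  have [KQ|nKQ] := pselect (kernel Qm.1); last by exists (Qm.1, Qm.1, 0%N) => /nKQ.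
  by have [r ?] := kernel_splitting Qm.2 KQ; exists r.
have [split_pair split_pairP] := choice split_ex.
pose split Q m := split_pair (Q, m).
have splitP Q m : kernel Q -> splitting Q m (split Q m) := split_pairP (Q, m).
have [y [x Cxy] nthin] := not_countable_setD nproj countable_thin_proj.
have KP0 := kernel_of_not_thin Cxy nthin.
exists (fun b => (branch split (x, y) b).2); split; first exact (branch_inj splitP KP0).
move=> b; exists (branch split (x, y) b).1; rewrite -surjective_pairing.
exact: branch_in.
Qed.

End PerfectProjection.

Definition bool_of_set (Y : set nat) : nat -> bool := fun i => `[< Y i >].
Definition set_of_bool (y : nat -> bool) : set nat := [set i | y i].

Lemma bool_of_setK : cancel bool_of_set set_of_bool.
Proof. by move=> Y; apply/funext => i; apply/propext; split => /asboolP. Qed.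

Lemma set_of_boolK : cancel set_of_bool bool_of_set.
Proof. by move=> y; apply/funext => i; rewrite /bool_of_set /set_of_bool /= asboolb. Qed.

Section Sigma11Code.
Variables U V : nat -> set (baire * Pomega).

(* [(x, y)] codes [Y := set_of_bool y] with a witness [p := fun i => (x i).1]
   of [Y]; [(x n).2] certifies that [(p, Y)] avoids [U n `\` V n]: either it is
   [0] and [(p, Y)] is not in [U n], or it is [k.+1] and [V n] contains every
   [(q, B)] agreeing with [(p, Y)] below [k].  Openness of [V n] makes such a [k]
   exist, and openness of [U n] makes the set of codes closed. *)
Definition Sigma11_code : set (@seqpair (nat * nat)%type bool) := fun P =>
  forall n,
  ((P.1 n).2 = 0%N -> ~ U n (fun i => (P.1 i).1, set_of_bool P.2)) /\
  (forall k, (P.1 n).2 = k.+1 -> forall (q : baire) (B : Pomega),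
     (forall i, (i < k)%N -> q i = (P.1 i).1) ->
     (forall i, (i < k)%N -> (B i <-> P.2 i)) -> V n (q, B)).

Lemma Sigma11_code_closed : (forall n, baire_scott_open (U n)) ->
  prefix_closed Sigma11_code.
Proof.
move=> U_open P P_lim n; split.
- move=> xn0 Un; have [n0 [F [fF [FY Unbhd]]]] := U_open n _ _ Un.
  have [M FM] := finite_set_nat_bounded fF.
  have [Q CQ PQ] := P_lim (n0 + M + n.+1)%N.
  have [CQ0 _] := CQ n; apply: CQ0.
    by have [<- _] := PQ n ltac:(lia).
  apply: Unbhd => [i ilt | i Fi]; first by have [<- _] := PQ i ltac:(lia).
  rewrite /set_of_bool /=; have [_ <-] := PQ i ltac:(have := FM i Fi; lia); exact: FY.
- move=> k xnk q B qP BP; have [Q CQ PQ] := P_lim (k + n.+1)%N.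
  have [_ CQk] := CQ n; apply: (CQk k).
  + by have [<- _] := PQ n ltac:(lia).
  + by move=> i ilt; have [<- _] := PQ i ltac:(lia); exact: qP.
  + by move=> i ilt; have [_ <-] := PQ i ltac:(lia); exact: BP.
Qed.

Lemma Sigma11_codeP (Y : Pomega) : (forall n, baire_scott_open (V n)) ->
  (exists p : baire, ~ (exists n, U n (p, Y) /\ ~ V n (p, Y))) <->
  exists x, Sigma11_code (x, bool_of_set Y).
Proof.
move=> V_open; split=> [[p pY] | [x code_x]].
- have cert n : exists r : nat, (r = 0%N -> ~ U n (p, Y)) /\
      (forall k, r = k.+1 -> forall (q : baire) (B : Pomega),
        (forall i, (i < k)%N -> q i = p i) ->
        (forall i, (i < k)%N -> (B i <-> bool_of_set Y i)) -> V n (q, B)).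
    have [Un|nUn] := pselect (U n (p, Y)); last by exists 0%N.
    have Vn : V n (p, Y) by apply: contrapT => nVn; apply: pY; exists n.
    have [n0 [F [fF [FY Vnbhd]]]] := V_open n _ _ Vn.
    have [M FM] := finite_set_nat_bounded fF.
    exists (n0 + M).+1; split=> // k [<-] q B qp BY.
    apply: Vnbhd => [i ilt | i Fi]; first by apply: qp; lia.
    by apply/(BY i ltac:(have := FM i Fi; lia))/asboolP/FY.
  have [r rP] := choice cert.
  by exists (fun i => (p i, r i)) => n /=; rewrite bool_of_setK.
- exists (fun i => (x i).1) => -[n [Un nVn]]; apply: nVn.
  have [xn0 xnk] := code_x n; rewrite /= bool_of_setK in xn0.
  case: (x n).2 xn0 xnk => [/(_ erefl) // | k _ /(_ k erefl)].
  by apply=> // i _; split=> /asboolP.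
Qed.

End Sigma11Code.

Theorem proposition3p5 (X : topologicalType) :
  CB0_Sigma11 X -> ~ countable [set: X] ->
  ([set: X] #= [set: set nat])%card.
Proof.
move=> [S [[U [V [U_open [V_open eS]]]] [f [f_inj [f_range _]]]]] nX.
have XS : ([set: X] #= S)%card.
  by rewrite -f_range; apply/card_esym/inj_card_eq => a b _ _; exact: f_inj.
have SP Y : S Y <-> exists x, Sigma11_code U V (x, bool_of_set Y).
  by rewrite eS; exact: Sigma11_codeP.
have nproj : ~ countable [set y | exists x, Sigma11_code U V (x, y)].
  move=> cproj; apply: nX; rewrite (eq_countable XS); apply: sub_countable cproj.
  apply: (card_le_inj (f := bool_of_set)) => [Y Z _ _ /(congr1 set_of_bool) | Y /SP //].
  by rewrite !bool_of_setK.
have [h [h_inj hP]] := perfect_projection (Sigma11_code_closed U_open) nproj.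
apply: (card_eq_trans XS); apply: Cantor_Bernstein; first exact: card_leT.
apply: (card_le_inj (f := fun Z => set_of_bool (h (bool_of_set Z)))).
  move=> Y Z _ _ /(congr1 bool_of_set); rewrite !set_of_boolK => /h_inj.
  by move/(congr1 set_of_bool); rewrite !bool_of_setK.
by move=> Z _; apply/SP; rewrite set_of_boolK.
Qed.
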